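(* Let $h:\mathbb{R}^p\times[t_0,t_f)\to\mathbb{R}$ be a CBF for the first-order system $\dot{\mathbf{p}}=\mathbf{f}(\mathbf{p})+\mathbf{G}(\mathbf{p})\mathbf{z}$ on a set-valued flow $\mathcal{D}:[t_0,t_f)\rightrightarrows\mathbb{R}^p$, and let $\mathbf{k}:\mathbb{R}^p\times[t_0,t_f)\to\mathbb{R}^z$ be continuously differentiable with $\dot h(\mathbf{p},t,\mathbf{k}(\mathbf{p},t))>-\alpha(h(\mathbf{p},t))$ for all $(\mathbf{p},t)\in\mathcal{G}(\mathcal{D})$, where $\alpha$ is an extended class-$\mathcal{K}_\infty$ function. For $\sigma>0$ define $h_1:\mathbb{R}^p\times\mathbb{R}^z\times[t_0,t_f)\to\mathbb{R}$ by $h_1(\mathbf{p},\mathbf{z},t)=h(\mathbf{p},t)-\frac{1}{2\sigma}\|\mathbf{z}-\mathbf{k}(\mathbf{p},t)\|^2$. Then $h_1$ is a CBF for the second-order system $\dot{\mathbf{p}}=\mathbf{f}(\mathbf{p})+\mathbf{G}(\mathbf{p})\mathbf{z}$, $\dot{\mathbf{z}}=\mathbf{f}_1(\mathbf{p},\mathbf{z})+\mathbf{G}_1(\mathbf{p},\mathbf{z})\mathbf{u}$, with any associated extended class-$\mathcal{K}_\infty$ function $\alpha_1$ satisfying $\alpha_1(s)\ge\alpha(s)$ for all $s\in\mathbb{R}$.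
   Context: First-order model: $\dot{\mathbf{p}}=\mathbf{f}(\mathbf{p})+\mathbf{G}(\mathbf{p})\mathbf{z}$, $\mathbf{p}\in\mathbb{R}^p$, $\mathbf{z}\in\mathbb{R}^z$, $\mathbf{f},\mathbf{G}$ locally Lipschitz, $\mathbf{G}(\mathbf{p})$ full row rank for all $\mathbf{p}$. Second-order strict-feedback model: state $(\mathbf{p},\mathbf{z})$, input $\mathbf{u}\in\mathbb{R}^m$, with additionally $\mathbf{f}_1:\mathbb{R}^p\times\mathbb{R}^z\to\mathbb{R}^z$, $\mathbf{G}_1:\mathbb{R}^p\times\mathbb{R}^z\to\mathbb{R}^{z\times m}$ locally Lipschitz and $\mathbf{G}_1(\mathbf{p},\mathbf{z})$ of full row rank for all $(\mathbf{p},\mathbf{z})$. A continuous $\alpha:\mathbb{R}\to\mathbb{R}$ is extended class-$\mathcal{K}_\infty$ if strictly increasing, $\alpha(0)=0$, $\lim_{s\to\pm\infty}\alpha(s)=\pm\infty$. Graph of a set-valued flow $\mathcal{D}$: $\mathcal{G}(\mathcal{D})=\{(\mathbf{x},t):\mathbf{x}\in\mathcal{D}(t)\}$. CBF definition (for a control-affine system $\dot{\mathbf{x}}=\mathbf{F}(\mathbf{x})+\mathbf{B}(\mathbf{x})\mathbf{v}$ with state $\mathbf{x}\in\mathbb{R}^n$, input $\mathbf{v}$): a continuously differentiable $h:\mathbb{R}^n\times[t_0,t_f)\to\mathbb{R}$ with $\frac{\partial}{\partial\mathbf{x}}h\ne\mathbf{0}$ whenever $h=0$, and $\mathcal{C}(t)=\{\mathbf{x}:h(\mathbf{x},t)\ge0\}$,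 is a CBF on the set-valued flow $\mathcal{D}$ (with $\mathcal{C}(t)\subseteq\mathcal{D}(t)$ for all $t$) with associated extended class-$\mathcal{K}_\infty$ function $\alpha$ if for all $(\mathbf{x},t)\in\mathcal{G}(\mathcal{D})$, $\sup_{\mathbf{v}}\dot h(\mathbf{x},t,\mathbf{v})>-\alpha(h(\mathbf{x},t))$, where $\dot h(\mathbf{x},t,\mathbf{v})=\frac{\partial h}{\partial\mathbf{x}}(\mathbf{F}(\mathbf{x})+\mathbf{B}(\mathbf{x})\mathbf{v})+\frac{\partial h}{\partial t}$. For the first-order model, $\dot h(\mathbf{p},t,\mathbf{z})=\frac{\partial h}{\partial\mathbf{p}}(\mathbf{f}(\mathbf{p})+\mathbf{G}(\mathbf{p})\mathbf{z})+\frac{\partial h}{\partial t}$; ''CBF for the second-order system'' means this definition with $\mathbf{x}=(\mathbf{p},\mathbf{z})$ and input $\mathbf{u}$ (existence of some suitable flow $\mathcal{D}_1$). *)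

From HB Require Import structures.
From mathcomp Require Import all_boot all_order all_algebra.
From mathcomp Require Import all_classical all_reals all_analysis.
Set Implicit Arguments. Unset Strict Implicit. Unset Printing Implicit Defensive.
Import Order.TTheory GRing.Theory Num.Theory.
Import numFieldNormedType.Exports.
Local Open Scope classical_set_scope.
Local Open Scope ring_scope.

Section CBF.
Variable R : realType.

Definition sqnorm (n : nat) (v : 'cV[R]_n) : R := \sum_(i < n) (v i 0) ^+ 2.

Definition in_time (t0 : R) (tf : \bar R) (t : R) : Prop := t0 <= t /\ (t%:E < tf)%E.

Definition uncurry2 (n : nat) (V : normedModType R) (h : 'cV[R]_n -> R -> V)
  : 'cV[R]_n * R -> V := fun xt => h xt.1 xt.2.

Definition C1_on (n : nat) (V : normedModType R) (t0 : R) (tf : \bar R)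
  (h : 'cV[R]_n -> R -> V) : Prop :=
  (forall x t, in_time t0 tf t -> differentiable (uncurry2 h) (x, t)) /\
  (forall (w : 'cV[R]_n) (s : R),
     {within [set xt : 'cV[R]_n * R | in_time t0 tf xt.2],
       continuous (fun xt => 'd (uncurry2 h) xt (w, s))}).

Definition dhdx (n : nat) (h : 'cV[R]_n -> R -> R) x t (w : 'cV[R]_n) : R :=
  'd (uncurry2 h) (x, t) (w, 0).
Definition dhdt (n : nat) (h : 'cV[R]_n -> R -> R) x t : R :=
  'd (uncurry2 h) (x, t) (0, 1).

Definition hdot (n m : nat) (F : 'cV[R]_n -> 'cV[R]_n) (B : 'cV[R]_n -> 'M[R]_(n, m))
  (h : 'cV[R]_n -> R -> R) x t (v : 'cV[R]_m) : R :=
  dhdx h x t (F x + B x *m v) + dhdt h x t.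

Definition ext_classKinf (alpha : R -> R) : Prop :=
  continuous alpha /\ {homo alpha : s1 s2 / s1 < s2} /\ alpha 0 = 0 /\
  (alpha x @[x --> +oo] --> +oo) /\ (alpha x @[x --> -oo] --> -oo).

Definition graph (n : nat) (t0 : R) (tf : \bar R) (D : R -> set 'cV[R]_n)
  : set ('cV[R]_n * R) := [set xt | in_time t0 tf xt.2 /\ D xt.2 xt.1].

Definition safe_set (n : nat) (h : 'cV[R]_n -> R -> R) (t : R) : set 'cV[R]_n :=
  [set x | 0 <= h x t].

Definition is_CBF (n m : nat) (F : 'cV[R]_n -> 'cV[R]_n) (B : 'cV[R]_n -> 'M[R]_(n, m))
  (t0 : R) (tf : \bar R) (h : 'cV[R]_n -> R -> R) (D : R -> set 'cV[R]_n)
  (alpha : R -> R) : Prop :=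
  C1_on t0 tf h /\
  (forall x t, in_time t0 tf t -> h x t = 0 -> exists w, dhdx h x t w != 0) /\
  (forall t, in_time t0 tf t -> safe_set h t `<=` D t) /\
  ext_classKinf alpha /\
  (forall x t, graph t0 tf D (x, t) ->
     (- alpha (h x t))%:E < ereal_sup [set (hdot F B h x t v)%:E | v in [set: 'cV[R]_m]])%E.

(* local Lipschitz continuity (any norm; all equivalent in finite dimension) *)
Definition loc_lipschitz (X Y : normedModType R) (g : X -> Y) : Prop :=
  forall x0 : X, exists r : R, 0 < r /\ exists L : R,
    forall y1 y2 : X, `|y1 - x0| < r -> `|y2 - x0| < r -> `|g y1 - g y2| <= L * `|y1 - y2|.

(* second-order strict-feedback system in the state x = (p, z) = col_mx p z *)
Definition F2 (p z : nat) (f : 'cV[R]_p -> 'cV[R]_p) (G : 'cV[R]_p -> 'M[R]_(p, z))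
  (f1 : 'cV[R]_p -> 'cV[R]_z -> 'cV[R]_z) (x : 'cV[R]_(p + z)) : 'cV[R]_(p + z) :=
  col_mx (f (usubmx x) + G (usubmx x) *m dsubmx x) (f1 (usubmx x) (dsubmx x)).
Definition B2 (p z m : nat) (G1 : 'cV[R]_p -> 'cV[R]_z -> 'M[R]_(z, m))
  (x : 'cV[R]_(p + z)) : 'M[R]_(p + z, m) :=
  col_mx 0 (G1 (usubmx x) (dsubmx x)).

Definition h1 (p z : nat) (sigma : R) (h : 'cV[R]_p -> R -> R)
  (k : 'cV[R]_p -> R -> 'cV[R]_z) (x : 'cV[R]_(p + z)) (t : R) : R :=
  h (usubmx x) t - 1 / (2 * sigma) * sqnorm (dsubmx x - k (usubmx x) t).

End CBF.

From HB Require Import structures.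
From mathcomp Require Import all_boot all_order all_algebra.
From mathcomp Require Import all_classical all_reals all_analysis.
From mathcomp Require Import lra.
Set Implicit Arguments. Unset Strict Implicit. Unset Printing Implicit Defensive.
Import Order.TTheory GRing.Theory Num.Theory.
Import numFieldNormedType.Exports.
Local Open Scope classical_set_scope.
Local Open Scope ring_scope.

(* The penalty in h1 is nonpositive and vanishes exactly on the manifold z = k(p,t), so
   h1 <= h and D1(t) = {(p,z) | p in D(t)} contains the safe set of h1.  Along the
   second-order system the derivative of h1 is affine in u with slope
   -(1/sigma) G1^T (z - k): off the manifold this slope is nonzero because G1 has full
   row rank, so the supremum over u is +oo; on the manifold h1 = h and the derivative
   reduces to hdot h at z = k, which exceeds -alpha(h) >= -alpha1(h).  Regularity on
   {h1 = 0} splits the same way: off the manifold the z-gradient -(z - k)/sigma is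
   nonzero, on it the p-gradient is that of h. *)

Lemma cvg_within_map {T U : topologicalType} (A : set T) (B : set U) (g : T -> U) (x : T) :
  {for x, continuous g} -> (forall y, A y -> B (g y)) ->
  g @ within A (nbhs x) --> within B (nbhs (g x)).
Proof.
move=> cg AB S BS; have := cg _ BS; rewrite /within /= !nbhs_simpl /=.
by apply: filterS => y /= Sy Ay; exact: Sy (AB _ Ay).
Qed.

Section Preliminaries.
Variable R : realType.

Lemma continuous_usubmx m1 m2 n :
  continuous (usubmx : 'M[R]_(m1 + m2, n) -> 'M[R]_(m1, n)).
Proof.
move=> u A /nbhs_ballP[e /= e0 eA].
apply/nbhs_ballP; exists e => //= v [_ uv]; apply: eA; split => // i j.
by apply: (le_lt_trans _ (uv (lshift m2 i) j)); rewrite !mxE.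
Qed.

Lemma continuous_dsubmx m1 m2 n :
  continuous (dsubmx : 'M[R]_(m1 + m2, n) -> 'M[R]_(m2, n)).
Proof.
move=> u A /nbhs_ballP[e /= e0 eA].
apply/nbhs_ballP; exists e => //= v [_ uv]; apply: eA; split => // i j.
by apply: (le_lt_trans _ (uv (rshift m1 i) j)); rewrite !mxE.
Qed.

Lemma is_diff_linear (V W : normedModType R) (f : V -> W) (x : V) :
  linear f -> continuous f -> is_diff x f f.
Proof.
move=> lf cf; pose fL : {linear V -> W} := HB.pack f (GRing.isLinear.Build _ _ _ _ _ lf).
have -> : f = fL by [].
by apply: DiffDef; [exact/linear_differentiable | rewrite diff_lin].
Qed.

Lemma is_diff_sum (V W : normedModType R) n (F dF : 'I_n -> V -> W) (x : V) :
  (forall i, is_diff x (F i) (dF i)) ->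
  is_diff x (fun y => \sum_(i < n) F i y) (fun d => \sum_(i < n) dF i d).
Proof.
elim: n F dF => [|n IH] F dF dFi.
  have -> : (fun y => \sum_(i < 0) F i y) = cst 0 by apply/funext => y; rewrite big_ord0.
  have -> : (fun d => \sum_(i < 0) dF i d) = 0 by apply/funext => d; rewrite big_ord0.
  exact: is_diff_cst.
have -> : (fun y => \sum_(i < n.+1) F i y) =
    (fun y => \sum_(i < n) F (widen_ord (leqnSn n) i) y) + F ord_max.
  by apply/funext => y; rewrite big_ord_recr.
have -> : (fun d => \sum_(i < n.+1) dF i d) =
    (fun d => \sum_(i < n) dF (widen_ord (leqnSn n) i) d) + dF ord_max.
  by apply/funext => d; rewrite big_ord_recr.
exact: is_diffD (IH _ _ (fun i => dFi _)) (dFi ord_max).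
Qed.

Definition vdot n (a b : 'cV[R]_n) : R := (a^T *m b) 0 0.

Lemma vdotE n (a b : 'cV[R]_n) : vdot a b = \sum_(i < n) a i 0 * b i 0.
Proof. by rewrite /vdot mxE; apply: eq_bigr => i _; rewrite mxE. Qed.

Lemma sqnorm_vdot n (v : 'cV[R]_n) : sqnorm v = vdot v v.
Proof. by rewrite vdotE; apply: eq_bigr => i _; rewrite expr2. Qed.

Lemma vdot0l n (b : 'cV[R]_n) : vdot 0 b = 0.
Proof. by rewrite /vdot trmx0 mul0mx mxE. Qed.

Lemma vdotDr n (a b c : 'cV[R]_n) : vdot a (b + c) = vdot a b + vdot a c.
Proof. by rewrite /vdot mulmxDr mxE. Qed.

Lemma vdotZr n (a b : 'cV[R]_n) (l : R) : vdot a (l *: b) = l * vdot a b.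
Proof. by rewrite /vdot -scalemxAr mxE. Qed.

Lemma vdot_mulmxr n m (a : 'cV[R]_n) (B : 'M[R]_(n, m)) (u : 'cV[R]_m) :
  vdot a (B *m u) = vdot (B^T *m a) u.
Proof. by rewrite /vdot trmx_mul trmxK mulmxA. Qed.

Lemma row_free_trmx_mul_eq0 n m (B : 'M[R]_(n, m)) (e : 'cV[R]_n) :
  row_free B -> (B^T *m e == 0) = (e == 0).
Proof.
move=> B_free; apply/eqP/eqP => [/(congr1 trmx)|->]; last exact: mulmx0.
rewrite trmx_mul trmxK trmx0 -(mul0mx _ B) => /(row_free_inj B_free)/(congr1 trmx).
by rewrite trmxK trmx0.
Qed.

Lemma sqnorm_ge0 n (v : 'cV[R]_n) : 0 <= sqnorm v.
Proof. by apply: sumr_ge0 => i _; exact: sqr_ge0. Qed.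

Lemma sqnorm0 n : sqnorm (0 : 'cV[R]_n) = 0.
Proof. by rewrite sqnorm_vdot vdot0l. Qed.

Lemma sqnorm_gt0 n (v : 'cV[R]_n) : v != 0 -> 0 < sqnorm v.
Proof.
move=> v0; rewrite lt_neqAle sqnorm_ge0 andbT.
apply: contra v0; rewrite eq_sym psumr_eq0 => [/allP v0|i _]; last exact: sqr_ge0.
apply/eqP/matrixP => i j; rewrite ord1 mxE.
by apply/eqP; rewrite -sqrf_eq0; exact: v0 (mem_index_enum i).
Qed.

Lemma is_diff_sqnorm (V : normedModType R) n (g dg : V -> 'cV[R]_n) (x : V) :
  is_diff x g dg -> is_diff x (fun y => sqnorm (g y)) (fun d => 2 * vdot (g x) (dg d)).
Proof.
move=> dg_g.
have coord i : is_diff x (fun y => g y i 0) (fun d => dg d i 0).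
  have coord_lin : is_diff (g x) (fun N : 'cV[R]_n => N i 0) (fun N => N i 0).
    by apply: is_diff_linear; [move=> a M N; rewrite !mxE | exact: coord_continuous].
  exact: is_diff_comp dg_g coord_lin.
under [X in is_diff _ _ X]eq_fun do rewrite vdotE mulr_sumr.
apply: is_diff_sum => i; under eq_fun do rewrite expr2.
under [X in is_diff _ _ X]eq_fun do rewrite mulr2n mulrDl mul1r.
exact: is_diffM.
Qed.

Lemma cvg_vdot T (F : set_system T) {FF : Filter F} n (a b : T -> 'cV[R]_n) a0 b0 :
  a @ F --> a0 -> b @ F --> b0 -> vdot (a x) (b x) @[x --> F] --> vdot a0 b0.
Proof.
move=> aa0 bb0; under eq_fun do rewrite vdotE; rewrite vdotE.
apply: cvg_big => // [|i _]; first exact: add_continuous.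
apply: cvgM.
  exact: (cvg_comp _ _ aa0 (@coord_continuous _ _ _ i 0 a0)).
exact: (cvg_comp _ _ bb0 (@coord_continuous _ _ _ i 0 b0)).
Qed.

Lemma hdotE n m (F : 'cV[R]_n -> 'cV[R]_n) (B : 'cV[R]_n -> 'M[R]_(n, m))
  (h : 'cV[R]_n -> R -> R) x t v :
  hdot F B h x t v = 'd (uncurry2 h) (x, t) (F x + B x *m v, 1).
Proof.
rewrite /hdot /dhdx /dhdt -linearD; congr ('d _ _ _).
by congr (_, _); rewrite /= ?addr0 ?add0r.
Qed.

Lemma exists_gt_affine (M c a : R) : a != 0 -> exists l, M < c + l * a.
Proof. by move=> a0; exists ((M - c + 1) / a); rewrite divfK //; lra. Qed.

End Preliminaries.

Section BacksteppingCBF.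
Variables (R : realType) (p z : nat) (sigma : R).
Variables (h : 'cV[R]_p -> R -> R) (k : 'cV[R]_p -> R -> 'cV[R]_z).

Definition dh1 (x : 'cV[R]_(p + z)) (t : R) (w : 'cV[R]_(p + z)) (s : R) : R :=
  'd (uncurry2 h) (usubmx x, t) (usubmx w, s)
  - sigma^-1 * vdot (dsubmx x - k (usubmx x) t)
                    (dsubmx w - 'd (uncurry2 k) (usubmx x, t) (usubmx w, s)).

Let proj_p (xt : 'cV[R]_(p + z) * R) : 'cV[R]_p * R := (usubmx xt.1, xt.2).

Let continuous_proj_p : continuous proj_p.
Proof.
move=> xt; apply: (@cvg_pair _ _ _ _ (nbhs (usubmx xt.1)) (nbhs xt.2)); last exact: cvg_snd.
by apply: continuous_comp; [exact: cvg_fst | exact: continuous_usubmx].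
Qed.

Let is_diff_proj_p xt : is_diff xt proj_p proj_p.
Proof.
apply: (@is_diff_linear R ('cV[R]_(p + z) * R)%type ('cV[R]_p * R)%type); last exact: continuous_proj_p.
by move=> a u v; rewrite /proj_p /=; congr (_, _); rewrite linearP.
Qed.

Lemma is_diff_h1 x t :
  differentiable (uncurry2 h) (usubmx x, t) -> differentiable (uncurry2 k) (usubmx x, t) ->
  is_diff (x, t) (uncurry2 (h1 sigma h k)) (fun d => dh1 x t d.1 d.2).
Proof.
move=> dh dk.
have through_proj (V : normedModType R) (g : 'cV[R]_p * R -> V) :
    differentiable g (usubmx x, t) -> is_diff (x, t) (g \o proj_p) ('d g (usubmx x, t) \o proj_p).
  move=> dg; have dg' : is_diff (proj_p (x, t)) g ('d g (usubmx x, t)) by exact: DiffDef.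
  exact: is_diff_comp (is_diff_proj_p _) dg'.
have dz xt : is_diff xt (fun xt : 'cV[R]_(p + z) * R => dsubmx xt.1) (fun d => dsubmx d.1).
  apply: is_diff_linear => [a u v|]; first by rewrite /= linearP.
  by move=> ?; apply: continuous_comp; [exact: cvg_fst | exact: continuous_dsubmx].
have dh1' := is_diffB (through_proj _ _ dh)
  (is_diffZ (1 / (2 * sigma)) (is_diff_sqnorm (is_diffB (dz _) (through_proj _ _ dk)))).
eapply is_diff_eq; first exact: dh1'.
apply/funext => d; rewrite /dh1 /=; congr (_ - _).
have half_twice (v : R) : 1 / (2 * sigma) * (2 * v) = sigma^-1 * v.
  by rewrite mul1r invfM mulrAC mulKf ?pnatr_eq0 // mulrC.
exact: half_twice.
Qed.

Lemma h1_le_h x t : 0 < sigma -> h1 sigma h k x t <= h (usubmx x) t.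
Proof.
move=> sigma_gt0; rewrite /h1 gerBl mulr_ge0 ?sqnorm_ge0 //.
by rewrite div1r invr_ge0 mulr_ge0 // ltW.
Qed.

Lemma h1_on_manifold x t : dsubmx x = k (usubmx x) t -> h1 sigma h k x t = h (usubmx x) t.
Proof. by move=> xk; rewrite /h1 xk subrr sqnorm0 mulr0 subr0. Qed.

Variables (t0 : R) (tf : \bar R).
Hypotheses (C1h : C1_on t0 tf h) (C1k : C1_on t0 tf k).

Lemma diff_h1 x t : in_time t0 tf t ->
  'd (uncurry2 (h1 sigma h k)) (x, t) = (fun d => dh1 x t d.1 d.2) :> (_ -> R).
Proof.
move=> tT; have dh1_xt := is_diff_h1 (C1h.1 (usubmx x) t tT) (C1k.1 (usubmx x) t tT).
by rewrite diff_val.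
Qed.

Let A := [set xt : 'cV[R]_(p + z) * R | in_time t0 tf xt.2].

Let cvg_diff_proj_p (V : normedModType R) (g : 'cV[R]_p -> R -> V) w s xt :
  C1_on t0 tf g -> A xt ->
  'd (uncurry2 g) (proj_p yt) (w, s) @[yt --> within A (nbhs xt)]
    --> 'd (uncurry2 g) (proj_p xt) (w, s).
Proof.
move=> [_ /(_ w s)/subspace_continuousP/(_ (proj_p xt)) cg] Axt.
apply: (cvg_comp _ _ _ (cg Axt)).
by apply: cvg_within_map; [exact: continuous_proj_p | move=> ?].
Qed.

Lemma C1_on_h1 : C1_on t0 tf (h1 sigma h k).
Proof.
split=> [x t tT|w s].
  by case: (is_diff_h1 (C1h.1 (usubmx x) t tT) (C1k.1 (usubmx x) t tT)).
apply: (@subspace_eq_continuous _ A _ (fun xt => dh1 xt.1 xt.2 w s)).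
  by move=> [x t] /[!inE] tT; rewrite /from_subspace diff_h1.
apply/subspace_continuousP => xt Axt.
apply: cvgB; first exact: cvg_diff_proj_p.
apply: cvgM; first exact: cvg_cst.
apply: cvg_vdot; last by apply: cvgB; [exact: cvg_cst | exact: cvg_diff_proj_p].
apply: cvg_within_filter; apply: cvgB.
  by apply: continuous_comp; [exact: cvg_fst | exact: continuous_dsubmx].
exact: continuous_comp (@continuous_proj_p xt) (differentiable_continuous (C1k.1 _ _ Axt)).
Qed.

Lemma dhdx_h1 x t w : in_time t0 tf t ->
  dhdx (h1 sigma h k) x t w = dhdx h (usubmx x) t (usubmx w)
    - sigma^-1 * vdot (dsubmx x - k (usubmx x) t)
                      (dsubmx w - 'd (uncurry2 k) (usubmx x, t) (usubmx w, 0)).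
Proof. by move=> tT; rewrite /dhdx diff_h1. Qed.

Lemma hdot_h1 (f : 'cV[R]_p -> 'cV[R]_p) (G : 'cV[R]_p -> 'M[R]_(p, z))
    (f1 : 'cV[R]_p -> 'cV[R]_z -> 'cV[R]_z) m (G1 : 'cV[R]_p -> 'cV[R]_z -> 'M[R]_(z, m))
    x t u : in_time t0 tf t ->
  hdot (F2 f G f1) (B2 G1) (h1 sigma h k) x t u =
  hdot f G h (usubmx x) t (dsubmx x)
  - sigma^-1 * vdot (dsubmx x - k (usubmx x) t)
      (f1 (usubmx x) (dsubmx x) + G1 (usubmx x) (dsubmx x) *m u
       - 'd (uncurry2 k) (usubmx x, t) (f (usubmx x) + G (usubmx x) *m dsubmx x, 1)).
Proof.
move=> tT; rewrite !hdotE diff_h1 //= /dh1 /F2 /B2.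
by rewrite mul_col_mx mul0mx add_col_mx addr0 col_mxKu col_mxKd.
Qed.

Lemma h1_boundary_regular x t : 0 < sigma -> in_time t0 tf t ->
  (h (usubmx x) t = 0 -> exists w, dhdx h (usubmx x) t w != 0) ->
  h1 sigma h k x t = 0 -> exists w, dhdx (h1 sigma h k) x t w != 0.
Proof.
move=> sigma_gt0 tT h_regular h1x0.
have [xk|xNk] := eqVneq (dsubmx x) (k (usubmx x) t).
  have [w hw] := h_regular (etrans (esym (h1_on_manifold xk)) h1x0).
  by exists (col_mx w 0); rewrite dhdx_h1 // xk subrr vdot0l mulr0 subr0 col_mxKu.
exists (col_mx 0 (dsubmx x - k (usubmx x) t)).
rewrite dhdx_h1 // col_mxKu col_mxKd /dhdx.
have -> : (0 : 'cV[R]_p, 0 : R) = 0 by [].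
rewrite !linear0 addr0 sub0r -sqnorm_vdot oppr_eq0 mulf_neq0 ?invr_eq0 ?gt_eqF //.
by rewrite sqnorm_gt0 // subr_eq0.
Qed.

Lemma h1_cbf_condition (f : 'cV[R]_p -> 'cV[R]_p) (G : 'cV[R]_p -> 'M[R]_(p, z))
    (f1 : 'cV[R]_p -> 'cV[R]_z -> 'cV[R]_z) m (G1 : 'cV[R]_p -> 'cV[R]_z -> 'M[R]_(z, m))
    (alpha alpha1 : R -> R) x t :
  0 < sigma -> in_time t0 tf t -> row_free (G1 (usubmx x) (dsubmx x)) ->
  (forall s, alpha s <= alpha1 s) ->
  - alpha (h (usubmx x) t) < hdot f G h (usubmx x) t (k (usubmx x) t) ->
  exists u, - alpha1 (h1 sigma h k x t) < hdot (F2 f G f1) (B2 G1) (h1 sigma h k) x t u.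
Proof.
move=> sigma_gt0 tT G1_free alpha_le k_safe.
have [xk|xNk] := eqVneq (dsubmx x) (k (usubmx x) t).
  exists 0; rewrite hdot_h1 // h1_on_manifold // xk subrr vdot0l mulr0 subr0.
  by have := alpha_le (h (usubmx x) t); lra.
set e := dsubmx x - k (usubmx x) t.
set q := (G1 (usubmx x) (dsubmx x))^T *m e.
have q_neq0 : q != 0 by rewrite row_free_trmx_mul_eq0 // subr_eq0.
set Kd := 'd (uncurry2 k) (usubmx x, t) (f (usubmx x) + G (usubmx x) *m dsubmx x, 1).
set c := hdot f G h (usubmx x) t (dsubmx x) - sigma^-1 * vdot e (f1 (usubmx x) (dsubmx x) - Kd).
have slope_neq0 : - (sigma^-1 * sqnorm q) != 0.
  by rewrite oppr_eq0 mulf_neq0 ?invr_eq0 ?gt_eqF ?sqnorm_gt0.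
have [l] := exists_gt_affine (- alpha1 (h1 sigma h k x t)) c slope_neq0.
rewrite mulrN mulrCA => hl; exists (l *: q).
rewrite hdot_h1 // -/e -/Kd.
have -> : vdot e (f1 (usubmx x) (dsubmx x) + G1 (usubmx x) (dsubmx x) *m (l *: q) - Kd)
    = vdot e (f1 (usubmx x) (dsubmx x) - Kd) + l * sqnorm q.
  by rewrite addrAC [LHS]vdotDr vdot_mulmxr vdotZr -sqnorm_vdot.
by rewrite mulrDr opprD addrA.
Qed.

End BacksteppingCBF.

Theorem mainTheorem2 (R : realType) (p z m : nat)
  (f : 'cV[R]_p -> 'cV[R]_p) (G : 'cV[R]_p -> 'M[R]_(p, z))
  (f1 : 'cV[R]_p -> 'cV[R]_z -> 'cV[R]_z) (G1 : 'cV[R]_p -> 'cV[R]_z -> 'M[R]_(z, m))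
  (Hf : loc_lipschitz f) (HG : loc_lipschitz G)
  (HGrk : forall x, row_free (G x))
  (Hf1 : loc_lipschitz (fun pz : 'cV[R]_p * 'cV[R]_z => f1 pz.1 pz.2))
  (HG1 : loc_lipschitz (fun pz : 'cV[R]_p * 'cV[R]_z => G1 pz.1 pz.2))
  (HG1rk : forall x y, row_free (G1 x y))
  (t0 : R) (tf : \bar R)
  (h : 'cV[R]_p -> R -> R) (D : R -> set 'cV[R]_p) (alpha : R -> R)
  (Hh : is_CBF f G t0 tf h D alpha)
  (k : 'cV[R]_p -> R -> 'cV[R]_z) (Hk : C1_on t0 tf k)
  (Hhk : forall x t, graph t0 tf D (x, t) -> - alpha (h x t) < hdot f G h x t (k x t))
  (sigma : R) (Hsigma : 0 < sigma)
  (alpha1 : R -> R) (Halpha1 : ext_classKinf alpha1)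
  (Halpha1ge : forall s, alpha s <= alpha1 s) :
  exists D1 : R -> set 'cV[R]_(p + z),
    is_CBF (F2 f G f1) (B2 G1) t0 tf (h1 sigma h k) D1 alpha1.
Proof.
case: Hh => C1h [h_regular [h_safe _]].
exists (fun t => [set x | D t (usubmx x)]).
split; first exact: C1_on_h1.
split=> [x t tT|]; first exact: (h1_boundary_regular C1h Hk (x := x) Hsigma tT (h_regular _ _ tT)).
split=> [t tT x h1_ge0|].
  exact: h_safe t tT _ (le_trans (h1_ge0 : 0 <= _) (h1_le_h h k x t Hsigma)).
split=> // x t [/= tT Dx].
have [u hu] := h1_cbf_condition C1h Hk f1 (x := x) Hsigma tT (HG1rk _ _) Halpha1ge
  (Hhk _ _ (conj tT Dx)).
apply: (@lt_le_trans _ _ (hdot (F2 f G f1) (B2 G1) (h1 sigma h k) x t u)%:E).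
  by rewrite lte_fin.
by apply: ereal_sup_ubound; exists u.
Qed.
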